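(* Let $n_0\ge1$ and $n_1=2n_0$. For $\ell\in\{0,1\}$ let $\mathbf{h}^\ell_k\in\mathbb{R}^{n_\ell}$, $k=0,\dots,n_\ell-1$, be the vectors with entries $(\mathbf{h}^\ell_k)_j=\cos\frac{2(j+\frac12)k\pi}{n_\ell}+\sin\frac{2(j+\frac12)k\pi}{n_\ell}$, $j=0,\dots,n_\ell-1$. Let $\mathbf{P}\in\mathbb{R}^{n_1\times n_0}$ be defined by $\mathbf{P}_{2j,j}=\mathbf{P}_{2j+1,j}=1$ for $j=0,\dots,n_0-1$ and all other entries $0$, and let $c_k:=\cos(k\pi/n_1)$. Then for all $k=0,\dots,n_0-1$, $\mathbf{P}\mathbf{h}^0_k=c_k\mathbf{h}^1_k-c_{n_0+k}\mathbf{h}^1_{n_0+k}$.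
   Context: Indices of vectors and matrices start at $0$. *)

From HB Require Import structures.
From mathcomp Require Import all_boot all_order all_algebra.
From mathcomp Require Import all_classical all_reals all_analysis.
Set Implicit Arguments. Unset Strict Implicit. Unset Printing Implicit Defensive.
Import Order.TTheory GRing.Theory Num.Theory.
Local Open Scope ring_scope.

Definition hvec (R : realType) (n k : nat) : 'cV[R]_n :=
  \col_(j < n) (cos (2 * ((j%:R + 2^-1) * k%:R * pi) / n%:R)
              + sin (2 * ((j%:R + 2^-1) * k%:R * pi) / n%:R)).

Definition Pmat (R : realType) (n0 : nat) : 'M[R]_(2 * n0, n0) :=
  \matrix_(i < 2 * n0, j < n0) (if (i %/ 2 == j)%N then 1 else 0).

Definition ccoef (R : realType) (n1 k : nat) : R := cos (k%:R * pi / n1%:R).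

From HB Require Import structures.
From mathcomp Require Import all_boot all_order all_algebra.
From mathcomp Require Import all_classical all_reals all_analysis.
From mathcomp Require Import ring.
Import Order.TTheory GRing.Theory Num.Theory.
Local Open Scope ring_scope.

(* The entries of h^l_k are values of the Hartley kernel cas = cos + sin.  If
   t is the angle of row m of h^0_k and a = k pi / n_1, the two fine rows
   i = 2m, 2m+1 of h^1_k sit at angles x = t -+ a, so t = x + (-1)^i a and the
   addition formula for cas expresses cas t through cas x and cas (x + pi/2).
   Passing from k to n_0 + k shifts the fine angle by (i + 1/2) pi, which turns
   cas x into (-1)^i cas (x + pi/2), while c_k = cos a and c_{n_0+k} = - sin a. *)

Lemma natr_divn2_addhalf (F : numFieldType) (i : nat) :
  (i %/ 2)%:R + 2^-1 = (i%:R + 2^-1 + (-1) ^+ i / 2) / 2 :> F.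
Proof.
rewrite -signr_odd {2}(divn_eq i 2) modn2 natrD natrM.
by case: (odd i) => /=; field.
Qed.

Section Hartley.
Context {R : realType}.

Definition cas (x : R) : R := cos x + sin x.

Lemma casDpi : alternating cas pi.
Proof. by move=> x; rewrite /cas cosDpi sinDpi opprD. Qed.

Lemma casD x y : cas (x + y) = cos y * cas x + sin y * cas (x + pi / 2).
Proof. by rewrite /cas cosD sinD cosDpihalf sinDpihalf; ring. Qed.

Lemma casD_sign (i : nat) x y :
  cas (x + (-1) ^+ i * y) = cos y * cas x + sin y * ((-1) ^+ i * cas (x + pi / 2)).
Proof.
rewrite casD -signr_odd; case: (odd i) => /=.
  by rewrite !mulN1r cosN sinN mulrN mulNr.
by rewrite !mul1r.
Qed.

Lemma hvecE n k :
  hvec R n k = \col_(j < n) cas (2 * ((j%:R + 2^-1) * k%:R * pi) / n%:R).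
Proof. by []. Qed.

Lemma Pmat_mulmxE n0 p (A : 'M[R]_(n0, p)) (i : 'I_(2 * n0)) (j : 'I_n0) l :
  (i %/ 2)%N = j -> (Pmat R n0 *m A) i l = A j l.
Proof.
move=> ij; rewrite !mxE (bigD1 j) //= mxE ij eqxx mul1r big1 ?addr0 // => j' j'j.
by rewrite mxE ij eq_sym -[_ == _]/(j' == j) (negbTE j'j) mul0r.
Qed.

End Hartley.

Theorem mainTheorem9 (R : realType) (n0 : nat) (hn0 : (1 <= n0)%N) :
  forall k : nat, (k < n0)%N ->
    Pmat R n0 *m hvec R n0 k =
      ccoef R (2 * n0) k *: hvec R (2 * n0) k
      - ccoef R (2 * n0) (n0 + k) *: hvec R (2 * n0) (n0 + k).
Proof.
move=> k _; apply/matrixP => i l.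
have him : (i %/ 2 < n0)%N by rewrite ltn_divLR // (mulnC n0 2).
have n0R : n0%:R != 0 :> R by rewrite pnatr_eq0 -lt0n.
rewrite !hvecE (@Pmat_mulmxE _ n0 1 _ i (Ordinal him)) // !mxE /=.
rewrite /ccoef natrM natrD.
set a := k%:R * pi / (2 * n0%:R).
set x := 2 * ((i%:R + 2^-1) * k%:R * pi) / (2 * n0%:R).
have -> : 2 * (((i %/ 2)%:R + 2^-1) * k%:R * pi) / n0%:R = x + (-1) ^+ i * a.
  by rewrite natr_divn2_addhalf /x /a; field.
have -> : 2 * ((i%:R + 2^-1) * (n0%:R + k%:R) * pi) / (2 * n0%:R)
    = x + pi / 2 + pi *+ i by rewrite /x mulr_natr; field.
have -> : (n0%:R + k%:R) * pi / (2 * n0%:R) = a + pi / 2 by rewrite /a; field.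
by rewrite casD_sign (alternatingn casDpi) cosDpihalf mulNr opprK.
Qed.
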